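(* Let $\phi\neq\psi$ be two seeds. Then $perms(\phi)\cap perms(\psi)\neq\emptyset$ if and only if either $mis(\phi)=mis(\psi)\oplus 1$ or $mis(\psi)=mis(\phi)\oplus 1$, and moreover the sequence obtained from $\phi$ by deleting the entry $mis(\psi)$ coincides with the sequence obtained from $\psi$ by deleting the entry $mis(\phi)$.
   Context: Fix an integer $n\ge 5$. An $n$-permutation is a sequence $(a_1,\dots,a_n)$ of the distinct elements of $\{1,\dots,n\}$. On $\{1,\dots,n-1\}$ let $a\oplus 1=a+1$ for $a<n-1$ and $(n-1)\oplus 1=1$. A seed is an $(n-1)$-tuple $\psi=(a_1,\dots,a_{n-1})$ of distinct elements of $\{1,\dots,n\}$ with $a_1=n$ and $a_2\oplus1\notin\{a_1,\dots,a_{n-1}\}$; its missing element is $mis(\psi)=a_2\oplus 1$. The package $perms(\psi)$ is the set of all $n$-permutations obtained from $\psi$ by inserting $mis(\psi)$ at any position and then applying any cyclic rotation. *)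

From mathcomp Require Import all_boot.
Set Implicit Arguments. Unset Strict Implicit. Unset Printing Implicit Defensive.

(* a (+) 1 on {1,...,n-1}: a+1 if a < n-1, and (n-1)(+)1 = 1. *)
Definition oplus1 (n a : nat) : nat := if a < n.-1 then a.+1 else 1.

(* A seed: (n-1)-tuple (a_1,...,a_{n-1}) of distinct elements of {1..n},
   with a_1 = n and a_2 (+) 1 not among the a_i.  Indices are 0-based. *)
Definition is_seed (n : nat) (s : seq nat) : bool :=
  [&& size s == n.-1, uniq s, all (fun a => (1 <= a <= n)) s,
      nth 0 s 0 == n & oplus1 n (nth 0 s 1) \notin s].

Definition mis (n : nat) (s : seq nat) : nat := oplus1 n (nth 0 s 1).

Definition insert_at (i : nat) (x : nat) (s : seq nat) : seq nat :=
  take i s ++ x :: drop i s.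

Definition in_perms (n : nat) (s p : seq nat) : Prop :=
  exists i k, i <= size s /\ k < n /\ p = rot k (insert_at i (mis n s) s).

(* Every p in perms(s) is duplicate-free, and s is a rotation of p with
   mis(s) deleted; a rotation of a duplicate-free sequence is determined by
   its head, and seeds all start with n.  Hence, for a common member p:
   - mis(phi) <> mis(psi), since otherwise phi and psi would be rotations of
     the same sequence, both starting with n;
   - deleting mis(psi) from phi and mis(phi) from psi both give rotations of
     p with both missing elements deleted, starting with n, hence equal;
   - comparing second entries of these equal sequences shows that one
     missing element is the second entry a_2 of the other seed, i.e. equals
     the other missing element minus 1 in the (+)1 cycle.
   Conversely, if mis(psi) = mis(phi) (+) 1, then mis(phi) is the second
   entry of psi, and inserting mis(phi) right after the leading n of phi
   gives a sequence from which deleting mis(psi) yields psi. *)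

From mathcomp Require Import all_boot zify.

Set Implicit Arguments.
Unset Strict Implicit.
Unset Printing Implicit Defensive.

Section Rotations.

Variable T : eqType.
Implicit Types (s : seq T) (x y : T).

Lemma filter_rot (p : pred T) k s :
  filter p (rot k s) = rot (count p (take k s)) (filter p s).
Proof.
rewrite !filter_mask map_rot mask_rot ?size_map //.
by rewrite -map_take count_map.
Qed.

Lemma rem_rot x k s : uniq s -> exists k', rem x (rot k s) = rot k' (rem x s).
Proof.
move=> us; exists (count (predC1 x) (take k s)).
by rewrite !rem_filter ?rot_uniq // filter_rot.
Qed.

Lemma rot_by_head x0 k s :
  uniq s -> rot k s = rot (index (head x0 (rot k s)) s) s.
Proof.
move=> us; case: (ltnP k (size s)) => hk.
  have -> : head x0 (rot k s) = nth x0 s k.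
    by rewrite -nth0 /rot nth_cat size_drop subn_gt0 hk nth_drop addn0.
  by rewrite index_uniq.
rewrite (rot_oversize hk); case: s {us hk} => // a t.
by rewrite /= eqxx rot0.
Qed.

Lemma rot_eq_head x0 a b s :
  uniq s -> head x0 (rot a s) = head x0 (rot b s) -> rot a s = rot b s.
Proof. by move=> us e; rewrite (rot_by_head x0 a us) e -(rot_by_head x0 b us). Qed.

Lemma rem_comm x y s : uniq s -> rem x (rem y s) = rem y (rem x s).
Proof.
move=> us; rewrite (rem_filter x (rem_uniq y us)) (rem_filter y us).
rewrite (rem_filter y (rem_uniq x us)) (rem_filter x us) -!filter_predI.
by apply: eq_filter => z /=; rewrite andbC.
Qed.

End Rotations.

Lemma insert_at_uniq x i s : x \notin s -> uniq s -> uniq (insert_at i x s).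
Proof.
move=> xs us; rewrite /insert_at -cat1s.
have /perm_uniq -> : perm_eq (take i s ++ [:: x] ++ drop i s) (x :: s).
  by rewrite perm_catCA /= cat_take_drop.
by rewrite /= xs.
Qed.

Lemma rem_insert_at x i s : x \notin s -> rem x (insert_at i x s) = s.
Proof.
elim: s i => [|a s IH] [|i] /=; rewrite ?eqxx // in_cons negb_or eq_sym.
by case/andP=> /negbTE -> /IH ->.
Qed.

Lemma insert_at_index x s :
  x \in s -> insert_at (index x s) x (rem x s) = s.
Proof.
elim: s => [|a s IH] //=; rewrite in_cons eq_sym.
case: eqP => [-> _|_ xs]; first by rewrite /insert_at take0 drop0.
by rewrite -[in RHS](IH xs).
Qed.

Lemma size_insert_at x i s : size (insert_at i x s) = (size s).+1.
Proof. by rewrite /insert_at size_cat /= addnS -size_cat cat_take_drop. Qed.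

Lemma rem_insert_at1 x y a t : x != a -> x != y ->
  rem x (insert_at 1 y (a :: t)) = insert_at 1 y (rem x (a :: t)).
Proof.
rewrite ![x == _]eq_sym => /negbTE ax /negbTE yx.
by rewrite /insert_at /= ax !take0 !drop0 /= yx take0 drop0.
Qed.

Lemma oplus1_range n a : 1 < n -> 0 < oplus1 n a <= n.-1.
Proof. by rewrite /oplus1; case: ifP; lia. Qed.

Lemma oplus1_inj n a b : 0 < a <= n.-1 -> 0 < b <= n.-1 ->
  oplus1 n a = oplus1 n b -> a = b.
Proof. by rewrite /oplus1; case: ifP; case: ifP; lia. Qed.

Lemma oplus1_neq n a : 2 < n -> 0 < a <= n.-1 -> oplus1 n a != a.
Proof. by rewrite /oplus1; case: ifP; lia. Qed.

Lemma mis_neq_n n s : 1 < n -> mis n s != n.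
Proof. by move=> n_gt1; have := oplus1_range (nth 0 s 1) n_gt1; rewrite /mis; lia. Qed.

(* A sequence one longer than s from which deleting mis(s) gives back s
   belongs to perms(s): it is s with mis(s) inserted, without rotation. *)
Lemma perms_of_rem n s p :
  0 < n -> rem (mis n s) p = s -> size s < size p -> in_perms n s p.
Proof.
move=> n_gt0 e size_p.
have mis_p : mis n s \in p.
  by apply: contraLR size_p => /rem_id; rewrite e => ->; rewrite ltnn.
have lt_index : index (mis n s) p < size p by rewrite index_mem.
have size_s : size s = (size p).-1 by rewrite -[in LHS]e size_rem.
exists (index (mis n s) p), 0; do 2 (split; first lia).
by have := insert_at_index mis_p; rewrite e rot0 => ->.
Qed.

Section Seed.

Variables (n : nat) (s : seq nat).
Hypotheses (n_gt2 : 2 < n) (seed_s : is_seed n s).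

Lemma seed_shape : s = n :: nth 0 s 1 :: drop 2 s.
Proof.
case/and5P: seed_s => /eqP size_s _ _ /eqP head_s _.
move: (s) size_s head_s => [|a [|b t]] /=; try lia.
by move=> _ ->; rewrite drop0.
Qed.

Lemma seed_head : head 0 s = n.
Proof. by rewrite seed_shape. Qed.

Lemma seed_nth1_range : 0 < nth 0 s 1 <= n.-1.
Proof.
case/and5P: seed_s => _ us /allP in_range _ _.
have s1 : nth 0 s 1 \in s by rewrite seed_shape !inE eqxx orbT.
have /andP[-> le_n] := in_range _ s1.
have : n \notin nth 0 s 1 :: drop 2 s by move: us; rewrite {1}seed_shape => /andP[].
by rewrite inE negb_or => /andP[/eqP ne _]; lia.
Qed.

Lemma head_rem_seed x : x != n -> head 0 (rem x s) = n.
Proof. by rewrite [in LHS]seed_shape /= eq_sym => /negbTE ->. Qed.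

Lemma nth1_rem_seed x : x != n -> x != nth 0 s 1 ->
  nth 0 (rem x s) 1 = nth 0 s 1.
Proof.
rewrite ![x == _]eq_sym => /negbTE xn /negbTE x1.
by rewrite [in LHS]seed_shape /= xn /= x1.
Qed.

Lemma perms_rotation p :
  in_perms n s p -> uniq p /\ exists k, s = rot k (rem (mis n s) p).
Proof.
case/and5P: seed_s => _ us _ _ mis_s [i [k [_ [_ ->]]]].
have uq := insert_at_uniq i mis_s us.
split; first by rewrite rot_uniq.
have [k' e] := rem_rot (mis n s) k uq; rewrite rem_insert_at // in e.
by exists (size s - k'); rewrite e -(size_rot k' s) -/(rotr k' _) rotK.
Qed.

End Seed.

Section CommonMember.

Variables (n : nat) (phi psi p : seq nat).
Hypotheses (n_gt2 : 2 < n) (seed_phi : is_seed n phi) (seed_psi : is_seed n psi).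
Hypotheses (p_phi : in_perms n phi p) (p_psi : in_perms n psi p).

(* Distinct seeds sharing a member of their packages have distinct missing
   elements: otherwise both would be rotations of the same sequence
   starting with n. *)
Lemma common_mis_neq : phi <> psi -> mis n phi != mis n psi.
Proof.
move=> neq; apply/eqP => same_mis; apply: neq.
have [up [a phiE]] := perms_rotation seed_phi p_phi.
have [_ [b psiE]] := perms_rotation seed_psi p_psi.
rewrite same_mis in phiE; rewrite [LHS]phiE [RHS]psiE.
apply: (@rot_eq_head _ 0 a b _ (rem_uniq _ up)).
by rewrite -phiE -psiE (seed_head n_gt2 seed_phi) (seed_head n_gt2 seed_psi).
Qed.

(* Deleting the other seed's missing element from each seed gives the same
   sequence: both are rotations of p with both missing elements deleted, and
   both start with n. *)
Lemma common_rem_eq : rem (mis n psi) phi = rem (mis n phi) psi.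
Proof.
have [up [a phiE]] := perms_rotation seed_phi p_phi.
have [_ [b psiE]] := perms_rotation seed_psi p_psi.
set x := mis n phi in phiE *; set y := mis n psi in psiE *.
have [c phiE'] := rem_rot y a (rem_uniq x up).
have [d psiE'] := rem_rot x b (rem_uniq y up).
rewrite (rem_comm x y up) in psiE'.
rewrite [in LHS]phiE [in RHS]psiE phiE' psiE'.
apply: (@rot_eq_head _ 0 c d _ (rem_uniq y (rem_uniq x up))).
rewrite -phiE' -psiE' -phiE -psiE.
rewrite (head_rem_seed n_gt2 seed_phi (mis_neq_n psi (ltnW n_gt2))).
by rewrite (head_rem_seed n_gt2 seed_psi (mis_neq_n phi (ltnW n_gt2))).
Qed.

End CommonMember.

Section TwoSeeds.

Variables (n : nat) (phi psi : seq nat).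
Hypotheses (n_gt2 : 2 < n) (seed_phi : is_seed n phi) (seed_psi : is_seed n psi).

(* When the missing elements differ, the deletion condition forces one of
   them to be the second entry of the other seed, i.e. the two missing
   elements are (+)1-adjacent: otherwise both deletions keep the second
   entries, which would then coincide, and so would the missing elements. *)
Lemma mis_adjacent :
  mis n phi != mis n psi -> rem (mis n psi) phi = rem (mis n phi) psi ->
  mis n phi = oplus1 n (mis n psi) \/ mis n psi = oplus1 n (mis n phi).
Proof.
move=> neq_mis eq_rem.
have [phi1|phi1] := eqVneq (mis n psi) (nth 0 phi 1).
  by left; rewrite {1}/mis -phi1.
have [psi1|psi1] := eqVneq (mis n phi) (nth 0 psi 1).
  by right; rewrite {1}/mis -psi1.
have := congr1 (fun s => nth 0 s 1) eq_rem.
rewrite (nth1_rem_seed n_gt2 seed_phi (mis_neq_n psi (ltnW n_gt2)) phi1).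
rewrite (nth1_rem_seed n_gt2 seed_psi (mis_neq_n phi (ltnW n_gt2)) psi1).
by move=> same_nth1; rewrite /mis same_nth1 eqxx in neq_mis.
Qed.

(* Conversely, if mis(psi) = mis(phi) (+) 1 and the deletion condition holds,
   then inserting mis(phi) right after the leading n of phi gives a common
   member of both packages: deleting mis(psi) from it yields psi. *)
Lemma common_member_of_adjacent :
  mis n psi = oplus1 n (mis n phi) -> rem (mis n psi) phi = rem (mis n phi) psi ->
  exists p, in_perms n phi p /\ in_perms n psi p.
Proof.
move=> succ eq_rem.
have psi1 : nth 0 psi 1 = mis n phi.
  exact: oplus1_inj (seed_nth1_range n_gt2 seed_psi)
                    (oplus1_range (nth 0 phi 1) (ltnW n_gt2)) succ.
have y_neq_x : mis n psi != mis n phi.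
  by rewrite succ oplus1_neq // oplus1_range // ltnW.
case/and5P: (seed_phi) => /eqP size_phi _ _ _ _.
case/and5P: (seed_psi) => /eqP size_psi u_psi _ _ _.
set x := mis n phi in psi1 y_neq_x succ eq_rem *.
set y := mis n psi in y_neq_x succ eq_rem *.
pose p := insert_at 1 x phi.
have rem_p : rem y p = psi.
  rewrite /p (seed_shape n_gt2 seed_phi) rem_insert_at1 //; last first.
    exact: mis_neq_n psi (ltnW n_gt2).
  rewrite -(seed_shape n_gt2 seed_phi) eq_rem.
  have index_x : index x psi = 1 by rewrite -psi1 index_uniq ?size_psi //; lia.
  by rewrite -index_x insert_at_index // -psi1 mem_nth ?size_psi //; lia.
exists p; split.
  by exists 1, 0; rewrite size_phi rot0; split; [lia | split; [lia | by []]].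
apply: perms_of_rem _ rem_p _; first lia.
by rewrite /p size_insert_at size_phi size_psi.
Qed.

End TwoSeeds.

Theorem mainTheorem2 (n : nat) (phi psi : seq nat) :
  5 <= n -> is_seed n phi -> is_seed n psi -> phi <> psi ->
  ((exists p : seq nat, in_perms n phi p /\ in_perms n psi p) <->
   ((mis n phi = oplus1 n (mis n psi) \/ mis n psi = oplus1 n (mis n phi)) /\
    rem (mis n psi) phi = rem (mis n phi) psi)).
Proof.
move=> n_ge5 seed_phi seed_psi neq; have n_gt2 : 2 < n by lia.
split.
- case=> p [p_phi p_psi].
  have eq_rem := common_rem_eq n_gt2 seed_phi seed_psi p_phi p_psi.
  split=> //; apply: (mis_adjacent n_gt2 seed_phi seed_psi _ eq_rem).
  exact: common_mis_neq n_gt2 seed_phi seed_psi p_phi p_psi neq.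
- case=> [[succ|succ] eq_rem].
  + have [p [p_psi p_phi]] :=
      common_member_of_adjacent n_gt2 seed_psi seed_phi succ (esym eq_rem).
    by exists p.
  + exact: common_member_of_adjacent n_gt2 seed_phi seed_psi succ eq_rem.
Qed.
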